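(* Suppose $G$ admits a presentation $\langle Z\mid S\rangle$ with all relators of length at most $M$ and satisfying a linear isoperimetric inequality with constant $L$. Then for every $K$ there exist $r$ and $0<\epsilon\le1$ such that the following holds: if $p$ is a geodesic in $\Gamma(G,Z)$, $p_0$ is a subpath of $p$ with $\ell(p_0)>2r$, and $q$ is a path in $\Gamma(G,Z)$ with the same endpoints as $p$ and $\ell(q)\le K\ell(p_0)$, then at least $\epsilon\ell(p_0)$ vertices of $p_0$ lie at distance at most $r$ from points of $q$.
   Context: $\Gamma(G,Z)$ is the Cayley graph with respect to the generating set $Z$ (closed under inverses), with its path metric. The linear isoperimetric inequality with constant $L$ means that every word over $Z$ representing the identity of length $n$ is a product of at most $Ln$ conjugates of relators and their inverses. *)

(* A possibly infinite group G is given by its carrier and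
   explicit operations with the group axioms; the free group F(Z) is modelled
   by words over signed letters up to free reduction. *)
From Stdlib Require Import Reals List Relations Arith.
Import ListNotations.
Open Scope R_scope.

Record Group (G : Type) := {
  gmul : G -> G -> G;
  ginv : G -> G;
  gone : G;
  gmulA : forall x y z, gmul x (gmul y z) = gmul (gmul x y) z;
  gmul1l : forall x, gmul gone x = x;
  gmul1r : forall x, gmul x gone = x;
  gmulVl : forall x, gmul (ginv x) x = gone;
  gmulVr : forall x, gmul x (ginv x) = gone }.
Arguments gmul {G}. Arguments ginv {G}. Arguments gone {G}.

Section Defs.
Context {G : Type} (grp : Group G).

Definition geval (w : list G) : G := fold_right (gmul grp) (gone grp) w.

Definition letter := (G * bool)%type.
Definition flip (a : letter) : letter := (fst a, negb (snd a)).
Definition finv (w : list letter) : list letter := rev (map flip w).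
Definition embed (w : list G) : list letter := map (fun z => (z, true)) w.
Definition leval (a : letter) : G := if snd a then fst a else ginv grp (fst a).
Definition feval (w : list letter) : G := fold_right (gmul grp) (gone grp) (map leval w).

Inductive freduce : list letter -> list letter -> Prop :=
| freduce_step : forall w1 w2 a, freduce (w1 ++ a :: flip a :: w2) (w1 ++ w2).

Definition free_eq : list letter -> list letter -> Prop :=
  clos_refl_sym_trans _ freduce.

Definition fword (Z : G -> Prop) (w : list letter) : Prop :=
  Forall (fun a => Z (fst a)) w.

Definition conj_word (c : list letter * list G * bool) : list letter :=
  let '(f, R, s) := c in f ++ (if s then embed R else finv (embed R)) ++ finv f.

Definition conj_prod (cs : list (list letter * list G * bool)) : list letter :=
  concat (map conj_word cs).

Definition conj_ok (Z : G -> Prop) (S : list G -> Prop)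
  (c : list letter * list G * bool) : Prop :=
  let '(f, R, _) := c in fword Z f /\ S R.

Definition presentation (Z : G -> Prop) (S : list G -> Prop) : Prop :=
  (forall z, Z z -> Z (ginv grp z)) /\
  (forall R, S R -> Forall Z R) /\
  (forall g, exists w, Forall Z w /\ geval w = g) /\
  (forall w, fword Z w ->
     (feval w = gone grp <->
      exists cs, Forall (conj_ok Z S) cs /\ free_eq w (conj_prod cs))).

Definition lin_isoperimetric (Z : G -> Prop) (S : list G -> Prop) (L : R) : Prop :=
  forall w, Forall Z w -> geval w = gone grp ->
    exists cs, Forall (conj_ok Z S) cs /\
      INR (length cs) <= L * INR (length w) /\
      free_eq (embed w) (conj_prod cs).

(* A path is a start vertex g and a word w over Z; its k-th vertex is
   g * (first k letters of w); its length is length w. *)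
Definition vertex (g : G) (w : list G) (k : nat) : G := gmul grp g (geval (firstn k w)).

Definition dist_le (Z : G -> Prop) (x y : G) (r : nat) : Prop :=
  exists u, Forall Z u /\ (length u <= r)%nat /\ gmul grp x (geval u) = y.

Definition geodesic (Z : G -> Prop) (w : list G) : Prop :=
  forall w', Forall Z w' -> geval w' = geval w -> (length w <= length w')%nat.

End Defs.

(* Let f be the distance to q truncated at r + 1 and h the distance from the start of p;
   both are 1-Lipschitz on the Cayley graph.  The discrete line integral of f dh is
   invariant under free reduction and at most M^2 around a relator, so by the isoperimetric
   inequality it is at most L M^2 l(p q^-1) <= 2 L K M^2 l(p0) around the loop p q^-1.
   It vanishes along q, where f = 0, while along the geodesic p the function h grows by
   exactly 1 per edge, so every vertex of p0 farther than r from q contributes r + 1.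
   Taking r + 1 > 4 |L K| M^2, at most half of the vertices of p0 are far from q. *)

From Stdlib Require Import Reals List Arith Relations Wf_nat Lia Lra Classical ClassicalEpsilon.
Import ListNotations.
Open Scope R_scope.

Definition sumR (l : list R) : R := fold_right Rplus 0 l.

Lemma sumR_app a b : sumR (a ++ b) = sumR a + sumR b.
Proof. induction a as [|x a IH]; [simpl; ring|]. unfold sumR in *; simpl; rewrite IH; ring. Qed.

Lemma sumR_le (a b : nat -> R) s :
  (forall k, In k s -> a k <= b k) -> sumR (map a s) <= sumR (map b s).
Proof.
  induction s as [|k s IH]; intro H; simpl; [lra|].
  apply Rplus_le_compat; auto using in_eq, in_cons.
Qed.

Lemma sumR_nonneg (a : nat -> R) s : (forall k, 0 <= a k) -> 0 <= sumR (map a s).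
Proof. intro H. induction s as [|k s IH]; simpl; [lra|]. specialize (H k). lra. Qed.

Lemma sumR_seq_sub (a : nat -> R) i l n : (forall k, 0 <= a k) -> (i + l <= n)%nat ->
  sumR (map a (seq i l)) <= sumR (map a (seq 0 n)).
Proof.
  intros Ha H. replace n with (i + (l + (n - i - l)))%nat by lia.
  rewrite !seq_app, !map_app, !sumR_app; simpl.
  pose proof (sumR_nonneg a (seq 0 i) Ha). pose proof (sumR_nonneg a (seq (i + l) (n - i - l)) Ha).
  lra.
Qed.

Lemma sumR_filter_ge (a : nat -> R) (P : nat -> bool) c s :
  (forall k, 0 <= a k) -> (forall k, P k = true -> c <= a k) ->
  c * INR (length (filter P s)) <= sumR (map a s).
Proof.
  intros Ha Hc. induction s as [|k s IH]; simpl; [lra|].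
  specialize (Ha k). destruct (P k) eqn:Hk; cbn [length]; [|lra].
  rewrite S_INR. specialize (Hc k Hk). lra.
Qed.

Lemma half_le_of_weighted_bound (n m c A : R) : 0 <= n -> 0 <= m -> 0 <= A -> 4 * A < c ->
  c * m <= 2 * A * (n + m) -> 1 / 2 * (n + m) <= n.
Proof. intros. destruct (Rle_lt_dec m n); [lra | nra]. Qed.

Lemma mul_le_abs_bound (a b x y e : R) : 0 <= x -> 0 <= y -> 0 <= e -> x <= 2 * (b * y) ->
  a * x * e <= 2 * (Rabs a * Rabs b * e) * y.
Proof.
  intros. pose proof (Rle_abs a). pose proof (Rle_abs b). pose proof (Rabs_pos a).
  apply Rle_trans with (Rabs a * x * e); [apply Rmult_le_compat_r; nra|].
  replace (2 * (Rabs a * Rabs b * e) * y) with (Rabs a * (2 * (Rabs b * y)) * e) by ring.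
  apply Rmult_le_compat_r; [assumption|]. apply Rmult_le_compat_l; nra.
Qed.

Section Group.
Context {G : Type} (grp : Group G).
Local Notation "x ⋅ y" := (gmul grp x y) (at level 40, left associativity).
Local Notation "x ^-1" := (ginv grp x) (at level 3, format "x ^-1").
Local Notation one := (gone grp).
Local Notation geval := (geval grp).
Local Notation vertex := (vertex grp).

Lemma ginvK x : x^-1^-1 = x.
Proof. now rewrite <- (gmul1r _ grp (x^-1^-1)), <- (gmulVl _ grp x), gmulA, gmulVl, gmul1l. Qed.

Lemma gmulI x a b : x ⋅ a = x ⋅ b -> a = b.
Proof.
  intro E. now rewrite <- (gmul1l _ grp a), <- (gmul1l _ grp b), <- (gmulVl _ grp x), <- !gmulA, E.
Qed.

Lemma gmulK x z : x ⋅ z ⋅ z^-1 = x.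
Proof. now rewrite <- gmulA, gmulVr, gmul1r. Qed.

Definition winv (v : list G) : list G := rev (map (ginv grp) v).

Lemma geval_cons z v : geval (z :: v) = z ⋅ geval v.
Proof. reflexivity. Qed.

Lemma geval_nil : geval [] = one.
Proof. reflexivity. Qed.

Lemma geval_app a b : geval (a ++ b) = geval a ⋅ geval b.
Proof.
  induction a as [|z a IH]; cbn [app].
  - symmetry; apply gmul1l.
  - now rewrite !geval_cons, IH, gmulA.
Qed.

Lemma winv_cons z v : winv (z :: v) = winv v ++ [z^-1].
Proof. reflexivity. Qed.

Lemma geval_winv v : geval v ⋅ geval (winv v) = one.
Proof.
  induction v as [|z v IH]; unfold winv in *; cbn [map rev].
  - apply gmul1l.
  - rewrite geval_app, !geval_cons, geval_nil, gmul1r, gmulA, <- (gmulA _ grp z), IH.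
    now rewrite gmul1r, gmulVr.
Qed.

Lemma length_winv v : length (winv v) = length v.
Proof. unfold winv. now rewrite length_rev, length_map. Qed.

Lemma Forall_winv (Z : G -> Prop) v :
  (forall z, Z z -> Z z^-1) -> Forall Z v -> Forall Z (winv v).
Proof. intros Zinv Hv. apply Forall_rev, Forall_map. exact (Forall_impl _ Zinv Hv). Qed.

Lemma geval_winv_one v : geval v = one -> geval (winv v) = one.
Proof. intro H. rewrite <- (gmul1l _ grp (geval (winv v))), <- H at 1. apply geval_winv. Qed.

Lemma map_leval_embed v : map (leval grp) (embed v) = v.
Proof. induction v; simpl; f_equal; auto. Qed.

Lemma map_leval_finv w : map (leval grp) (finv w) = winv (map (leval grp) w).
Proof.
  unfold finv, winv. rewrite map_rev, !map_map. f_equal. apply map_ext.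
  intros [z []]; unfold leval, flip; simpl; [reflexivity | now rewrite ginvK].
Qed.

Lemma vertex_0 x v : vertex x v 0 = x.
Proof. apply gmul1r. Qed.

Lemma vertex_cons x z v k : vertex x (z :: v) (S k) = vertex (x ⋅ z) v k.
Proof. unfold vertex. cbn [firstn]. now rewrite geval_cons, gmulA. Qed.

Section Integral.
Variables f h : G -> R.

(* Twice the trapezoidal sum for the integral of f dh along the path from x labelled v. *)
Fixpoint integral (x : G) (v : list G) : R :=
  match v with
  | [] => 0
  | z :: v' => (f x + f (x ⋅ z)) * (h (x ⋅ z) - h x) + integral (x ⋅ z) v'
  end.

Lemma integral_app x a b : integral x (a ++ b) = integral x a + integral (x ⋅ geval a) b.
Proof.
  revert x; induction a as [|z a IH]; intro x; cbn [app integral].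
  - rewrite geval_nil, gmul1r; ring.
  - rewrite IH, geval_cons, gmulA. ring.
Qed.

Lemma integral_cancel x v1 z v2 : integral x (v1 ++ z :: z^-1 :: v2) = integral x (v1 ++ v2).
Proof. rewrite !integral_app; simpl. rewrite gmulK. ring. Qed.

Lemma integral_winv x v : integral (x ⋅ geval v) (winv v) = - integral x v.
Proof.
  revert x; induction v as [|z v IH]; intro x.
  - simpl; ring.
  - rewrite winv_cons, integral_app, geval_cons, (gmulA _ grp x), IH.
    rewrite <- (gmulA _ grp (x ⋅ z)), geval_winv, gmul1r.
    cbn [integral]. rewrite gmulK. ring.
Qed.

Lemma integral_free_eq v v' :
  free_eq v v' -> forall x, integral x (map (leval grp) v) = integral x (map (leval grp) v').
Proof.
  induction 1 as [v1 v2 [w1 w2 a]| v1 | v1 v2 _ IH | v1 v2 v3 _ IH1 _ IH2]; intro x.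
  - rewrite !map_app; simpl. replace (leval grp (flip a)) with (leval grp a)^-1.
    + apply integral_cancel.
    + destruct a as [z []]; unfold leval, flip; simpl; [reflexivity | now rewrite ginvK].
  - reflexivity.
  - now symmetry.
  - congruence.
Qed.

Lemma integral_conj x v e :
  geval e = one -> integral x (v ++ e ++ winv v) = integral (x ⋅ geval v) e.
Proof.
  intro He. rewrite !integral_app, He, gmul1r, integral_winv. ring.
Qed.

End Integral.

Lemma integral_shift f h c x v :
  integral (fun y => f y - c) h x v = integral f h x v - 2 * c * (h (x ⋅ geval v) - h x).
Proof.
  revert x; induction v as [|z v IH]; intro x; cbn [integral].
  - rewrite geval_nil, gmul1r; ring.
  - rewrite IH, geval_cons, gmulA. ring.
Qed.

Section Lipschitz.
Variable Z : G -> Prop.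

Definition lipschitz (f : G -> R) : Prop := forall x z, Z z -> Rabs (f (x ⋅ z) - f x) <= 1.

Variables f h : G -> R.
Hypotheses (Lf : lipschitz f) (Lh : lipschitz h).

Lemma integral_bound v : Forall Z v ->
  forall x, Rabs (integral f h x v) <= INR (length v) * (2 * Rabs (f x) + INR (length v)).
Proof.
  induction 1 as [|z v Hz _ IH]; intro x; cbn [integral length].
  - rewrite Rabs_R0; simpl; lra.
  - specialize (IH (x ⋅ z)). specialize (Lf x z Hz). specialize (Lh x z Hz).
    assert (Hfz : Rabs (f (x ⋅ z)) <= Rabs (f x) + 1).
    { pose proof (Rabs_triang_inv (f (x ⋅ z)) (f x)). lra. }
    assert (Hstep : Rabs ((f x + f (x ⋅ z)) * (h (x ⋅ z) - h x)) <= 2 * Rabs (f x) + 1).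
    { rewrite Rabs_mult. pose proof (Rabs_triang (f x) (f (x ⋅ z))).
      pose proof (Rabs_pos (f x + f (x ⋅ z))). pose proof (Rabs_pos (h (x ⋅ z) - h x)). nra. }
    pose proof (Rabs_triang ((f x + f (x ⋅ z)) * (h (x ⋅ z) - h x)) (integral f h (x ⋅ z) v)).
    pose proof (pos_INR (length v)). rewrite S_INR. nra.
Qed.

End Lipschitz.

Lemma integral_loop_bound Z f h v x :
  lipschitz Z f -> lipschitz Z h -> Forall Z v -> geval v = one ->
  Rabs (integral f h x v) <= INR (length v) * INR (length v).
Proof.
  intros Lf Lh Hv Hone.
  (* On a loop, subtracting the constant f x from f does not change the integral. *)
  assert (Lf' : lipschitz Z (fun y => f y - f x)).
  { intros y z Hz.
    replace (f (y ⋅ z) - f x - (f y - f x)) with (f (y ⋅ z) - f y) by ring. auto. }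
  pose proof (integral_bound Z _ h Lf' Lh v Hv x) as B.
  rewrite integral_shift, Hone, gmul1r in B.
  replace (integral f h x v - 2 * f x * (h x - h x)) with (integral f h x v) in B by ring.
  replace (f x - f x) with 0 in B by ring. rewrite Rabs_R0 in B. lra.
Qed.

Section Relators.
Variables (Z : G -> Prop) (Rel : list G -> Prop) (M : nat).
Hypotheses (RelZ : forall R0, Rel R0 -> Forall Z R0) (Rel1 : forall R0, Rel R0 -> geval R0 = one)
  (RelM : forall R0, Rel R0 -> (length R0 <= M)%nat).
Variables f h : G -> R.
Hypotheses (Lf : lipschitz Z f) (Lh : lipschitz Z h).

Definition relator_word (R0 : list G) (s : bool) : list G :=
  map (leval grp) (if s then embed R0 else finv (embed R0)).

Lemma geval_relator_word R0 s : Rel R0 -> geval (relator_word R0 s) = one.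
Proof.
  intro HR. unfold relator_word. destruct s.
  - rewrite map_leval_embed. auto.
  - rewrite map_leval_finv, map_leval_embed. auto using geval_winv_one.
Qed.

Lemma integral_relator_bound R0 s y : Rel R0 ->
  Rabs (integral f h y (relator_word R0 s)) <= INR M * INR M.
Proof.
  intro HR. pose proof (le_INR _ _ (RelM R0 HR)). pose proof (pos_INR (length R0)).
  assert (B := integral_loop_bound Z f h R0 y Lf Lh (RelZ R0 HR) (Rel1 R0 HR)).
  unfold relator_word. destruct s.
  - rewrite map_leval_embed. nra.
  - rewrite map_leval_finv, map_leval_embed.
    rewrite <- (gmul1r _ grp y) at 1. rewrite <- (Rel1 R0 HR), integral_winv, Rabs_Ropp. nra.
Qed.

Lemma map_leval_conj_word F R0 s :
  map (leval grp) (conj_word (F, R0, s)) =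
  map (leval grp) F ++ relator_word R0 s ++ winv (map (leval grp) F).
Proof. unfold conj_word. now rewrite !map_app, map_leval_finv. Qed.

Lemma integral_conj_prod_bound cs : Forall (conj_ok Z Rel) cs ->
  forall x, Rabs (integral f h x (map (leval grp) (conj_prod cs)))
            <= INR (length cs) * (INR M * INR M).
Proof.
  induction 1 as [|[[F R0] s] cs [_ HR] _ IH]; intro x.
  - simpl. rewrite Rabs_R0. lra.
  - change (conj_prod ((F, R0, s) :: cs)) with (conj_word (F, R0, s) ++ conj_prod cs).
    rewrite map_app, integral_app, map_leval_conj_word, integral_conj
      by now apply geval_relator_word.
    rewrite !geval_app, geval_relator_word, gmul1l, geval_winv, gmul1r by exact HR.
    pose proof (integral_relator_bound R0 s (x ⋅ geval (map (leval grp) F)) HR).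
    pose proof (IH x). cbn [length]. rewrite S_INR.
    pose proof (Rabs_triang (integral f h (x ⋅ geval (map (leval grp) F)) (relator_word R0 s))
      (integral f h x (map (leval grp) (conj_prod cs)))). lra.
Qed.

Lemma integral_area_bound L v x : lin_isoperimetric grp Z Rel L -> Forall Z v -> geval v = one ->
  Rabs (integral f h x v) <= L * INR (length v) * (INR M * INR M).
Proof.
  intros HL Hv Hone. destruct (HL v Hv Hone) as [cs [Hcs [Hlen Hfree]]].
  assert (E := integral_free_eq f h _ _ Hfree x). rewrite map_leval_embed in E. rewrite E.
  pose proof (integral_conj_prod_bound cs Hcs x). pose proof (pos_INR M). nra.
Qed.

End Relators.

Section Distance.
Variable Z : G -> Prop.
Hypotheses (Zinv : forall z, Z z -> Z z^-1) (Zgen : forall g, exists w, Forall Z w /\ geval w = g).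

Definition dist (x y : G) : nat :=
  epsilon (inhabits 0%nat)
    (fun n => dist_le grp Z x y n /\ forall m, dist_le grp Z x y m -> (n <= m)%nat).

Lemma dist_spec x y :
  dist_le grp Z x y (dist x y) /\ forall m, dist_le grp Z x y m -> (dist x y <= m)%nat.
Proof.
  unfold dist; apply epsilon_spec.
  assert (Hex : exists n, dist_le grp Z x y n).
  { destruct (Zgen (x^-1 ⋅ y)) as [w [Hw E]]. exists (length w), w.
    repeat split; auto. now rewrite E, gmulA, gmulVr, gmul1l. }
  destruct (dec_inh_nat_subset_has_unique_least_element _ (fun n => classic _) Hex)
    as [n [Hn _]].
  now exists n.
Qed.

Lemma dist_le_dist x y : dist_le grp Z x y (dist x y).
Proof. apply dist_spec. Qed.

Lemma dist_min x y n : dist_le grp Z x y n -> (dist x y <= n)%nat.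
Proof. apply dist_spec. Qed.

Lemma dist_refl x : dist x x = 0%nat.
Proof.
  enough (dist x x <= 0)%nat by lia.
  apply dist_min. exists []. repeat split; auto. now rewrite geval_nil, gmul1r.
Qed.

Lemma dist_mulr_l x z t : Z z -> (dist x t <= S (dist (x ⋅ z) t))%nat.
Proof.
  intro Hz. destruct (dist_le_dist (x ⋅ z) t) as [v [Hv [Hl E]]].
  apply dist_min. exists (z :: v). repeat split; auto; cbn [length]; [lia|].
  now rewrite geval_cons, gmulA.
Qed.

Lemma dist_mulr_r t x z : Z z -> (dist t x <= S (dist t (x ⋅ z)))%nat.
Proof.
  intro Hz. destruct (dist_le_dist t (x ⋅ z)) as [v [Hv [Hl E]]].
  apply dist_min. exists (v ++ [z^-1]). repeat split.
  - apply Forall_app. auto.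
  - rewrite length_app; simpl; lia.
  - now rewrite geval_app, geval_cons, geval_nil, gmul1r, gmulA, E, gmulK.
Qed.

Lemma lipschitz_INR (h : G -> nat) :
  (forall x z, Z z -> (h x <= S (h (x ⋅ z)))%nat) -> lipschitz Z (fun x => INR (h x)).
Proof.
  intros Hh x z Hz. pose proof (Hh x z Hz) as H1. pose proof (Hh (x ⋅ z) z^-1 (Zinv z Hz)) as H2.
  rewrite gmulK in H2. apply le_INR in H1, H2. rewrite S_INR in H1, H2.
  apply Rabs_le. lra.
Qed.

Lemma dist_vertex_geodesic g w k : Forall Z w -> geodesic grp Z w -> (k <= length w)%nat ->
  dist g (vertex g w k) = k.
Proof.
  intros Hw Hgeo Hk. rewrite <- (firstn_skipn k w) in Hw. apply Forall_app in Hw as [Hpre Hsuf].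
  apply Nat.le_antisymm.
  - apply dist_min. exists (firstn k w). repeat split; auto. rewrite length_firstn. lia.
  - destruct (dist_le_dist g (vertex g w k)) as [v [Hv [Hl E]]].
    apply gmulI in E.
    assert (Hvw : geval (v ++ skipn k w) = geval w)
      by now rewrite geval_app, E, <- geval_app, firstn_skipn.
    pose proof (Hgeo _ (proj2 (Forall_app _ _ _) (conj Hv Hsuf)) Hvw) as H.
    rewrite length_app, length_skipn in H. lia.
Qed.

Fixpoint dist_path (q : nat -> G) (n : nat) (x : G) : nat :=
  match n with
  | O => dist x (q O)
  | S n' => Nat.min (dist_path q n' x) (dist x (q (S n')))
  end.

Lemma dist_path_le q n x m : (m <= n)%nat -> (dist_path q n x <= dist x (q m))%nat.
Proof.
  induction n as [|n IH]; intro Hm; simpl.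
  - now replace m with 0%nat by lia.
  - destruct (Nat.eq_dec m (S n)) as [->|Hne]; [lia|]. specialize (IH ltac:(lia)). lia.
Qed.

Lemma dist_path_attained q n x : exists m, (m <= n)%nat /\ dist_path q n x = dist x (q m).
Proof.
  induction n as [|n [m [Hm E]]]; simpl.
  - now exists 0%nat.
  - destruct (Nat.le_gt_cases (dist_path q n x) (dist x (q (S n)))).
    + exists m. split; lia.
    + exists (S n). split; lia.
Qed.

Lemma dist_path_mulr q n x z : Z z -> (dist_path q n x <= S (dist_path q n (x ⋅ z)))%nat.
Proof.
  intro Hz. induction n as [|n IH]; simpl.
  - now apply dist_mulr_l.
  - pose proof (dist_mulr_l x z (q (S n)) Hz). lia.
Qed.

Lemma dist_path_on_path q n m : (m <= n)%nat -> dist_path q n (q m) = 0%nat.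
Proof. intro Hm. pose proof (dist_path_le q n (q m) m Hm). rewrite dist_refl in H. lia. Qed.

Lemma dist_path_le_witness q n x r : (dist_path q n x <= r)%nat ->
  exists m, (m <= n)%nat /\ dist_le grp Z x (q m) r.
Proof.
  intro Hr. destruct (dist_path_attained q n x) as [m [Hm E]]. exists m. split; [exact Hm|].
  destruct (dist_le_dist x (q m)) as [v [Hv [Hl Hx]]]. exists v. repeat split; auto. lia.
Qed.

Lemma integral_vertices f h x v : integral f h x v =
  sumR (map (fun k => (f (vertex x v k) + f (vertex x v (S k))) *
                      (h (vertex x v (S k)) - h (vertex x v k))) (seq 0 (length v))).
Proof.
  revert x; induction v as [|z v IH]; intro x; [reflexivity|].
  cbn [integral length seq map]. rewrite <- seq_shift, map_map, IH. unfold sumR; cbn [fold_right].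
  f_equal.
  - now rewrite vertex_0, vertex_cons, vertex_0.
  - f_equal. apply map_ext. intro k. now rewrite !vertex_cons.
Qed.

Lemma integral_geodesic_ge f (P : nat -> bool) c g w i l :
  Forall Z w -> geodesic grp Z w -> (i + l <= length w)%nat -> (forall y, 0 <= f y) ->
  (forall k, P k = true -> c <= f (vertex g w k)) ->
  c * INR (length (filter P (seq i l))) <= integral f (fun y => INR (dist g y)) g w.
Proof.
  intros Hw Hgeo Hil Hf HP.
  eapply Rle_trans; [apply (sumR_filter_ge (fun k => f (vertex g w k))); auto|].
  eapply Rle_trans; [apply sumR_seq_sub; eauto|].
  rewrite integral_vertices. apply sumR_le. intros k Hk. apply in_seq in Hk.
  rewrite !dist_vertex_geodesic by (auto; lia). rewrite S_INR.
  specialize (Hf (vertex g w (S k))). lra.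
Qed.

Lemma integral_vanishing f h x v : (forall k, (k <= length v)%nat -> f (vertex x v k) = 0) ->
  integral f h x v = 0.
Proof.
  revert x; induction v as [|z v IH]; intros x Hf; cbn [integral]; [reflexivity|].
  assert (H0 : f x = 0) by (rewrite <- (Hf 0%nat), vertex_0; auto with arith).
  assert (H1 : f (x ⋅ z) = 0)
    by (rewrite <- (Hf 1%nat), vertex_cons, vertex_0; simpl; auto with arith).
  rewrite H0, H1, IH; [ring|].
  intros k Hk. rewrite <- vertex_cons. apply Hf. simpl; lia.
Qed.

End Distance.

Section FarVertices.
Variables (Z : G -> Prop) (Rel : list G -> Prop) (M : nat).
Hypotheses (Zinv : forall z, Z z -> Z z^-1) (Zgen : forall g, exists w, Forall Z w /\ geval w = g)
  (RelZ : forall R0, Rel R0 -> Forall Z R0) (Rel1 : forall R0, Rel R0 -> geval R0 = one)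
  (RelM : forall R0, Rel R0 -> (length R0 <= M)%nat).

Definition path_near (q : nat -> G) (n r : nat) (x : G) : bool := (dist_path Z q n x <=? r)%nat.

Lemma far_vertices_bound L g w u r i l :
  lin_isoperimetric grp Z Rel L -> Forall Z w -> geodesic grp Z w ->
  Forall Z u -> geval u = geval w -> (i + l <= length w)%nat ->
  INR (S r) *
    INR (length (filter (fun k => negb (path_near (vertex g u) (length u) r (vertex g w k)))
                        (seq i l)))
  <= L * INR (length w + length u) * (INR M * INR M).
Proof.
  intros HL Hw Hgeo Hu Heq Hil. set (q := vertex g u).
  set (f := fun x => INR (Nat.min (dist_path Z q (length u) x) (S r))).
  set (h := fun x => INR (dist Z g x)).
  assert (Lf : lipschitz Z f).
  { apply lipschitz_INR; auto. intros x z Hz.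
    pose proof (dist_path_mulr Z Zgen q (length u) x z Hz). lia. }
  assert (Lh : lipschitz Z h) by (apply lipschitz_INR; auto using dist_mulr_r).
  assert (Hloop : integral f h g (w ++ winv u) = integral f h g w).
  { rewrite integral_app, <- Heq, integral_winv, (integral_vanishing f h g u); [ring|].
    intros k Hk. unfold f. now rewrite dist_path_on_path. }
  apply Rle_trans with (integral f h g w).
  - apply integral_geodesic_ge; auto; [intro; apply pos_INR |].
    intros k Hk. apply Bool.negb_true_iff, Nat.leb_gt in Hk. unfold f.
    rewrite Nat.min_r; [apply Rle_refl | exact Hk].
  - rewrite <- Hloop. eapply Rle_trans; [apply Rle_abs|].
    replace (length w + length u)%nat with (length (w ++ winv u))
      by now rewrite length_app, length_winv.
    apply (integral_area_bound Z Rel M); auto.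
    + apply Forall_app. auto using Forall_winv.
    + now rewrite geval_app, <- Heq, geval_winv.
Qed.

End FarVertices.
End Group.

Lemma presentation_relator_one {G} (grp : Group G) Z S R0 :
  presentation grp Z S -> S R0 -> geval grp R0 = gone grp.
Proof.
  intros [_ [SZ [_ Ker]]] HR.
  assert (Hf : fword Z (embed R0)) by (apply Forall_map, (Forall_impl _ (fun _ H => H)), SZ, HR).
  rewrite <- (map_leval_embed grp R0). apply (Ker _ Hf).
  exists [([], R0, true)]. split; [repeat constructor; exact HR|].
  unfold conj_prod; simpl. rewrite !app_nil_r. apply rst_refl.
Qed.

Theorem lemma6p4 (G : Type) (grp : Group G) (Z : G -> Prop) (S : list G -> Prop)
  (M : nat) (L : R) :
  presentation grp Z S ->
  (forall Rl, S Rl -> (length Rl <= M)%nat) ->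
  lin_isoperimetric grp Z S L ->
  forall K : R, exists (r : nat) (eps : R), 0 < eps <= 1 /\
    forall (g : G) (w : list G) (i j : nat) (u : list G),
      Forall Z w -> geodesic grp Z w ->
      (i <= j <= length w)%nat -> (2 * r < j - i)%nat ->
      Forall Z u -> geval grp u = geval grp w ->
      INR (length u) <= K * INR (j - i) ->
      exists ks : list nat, NoDup ks /\
        Forall (fun k => (i <= k <= j)%nat /\
          exists m, (m <= length u)%nat /\
            dist_le grp Z (vertex grp g w k) (vertex grp g u m) r) ks /\
        eps * INR (j - i) <= INR (length ks).
Proof.
  intros HP SM HL K. pose proof HP as [Zinv [SZ [Zgen _]]].
  pose proof (fun R0 => presentation_relator_one grp Z S R0 HP) as S1.
  destruct (INR_unbounded (4 * (Rabs L * Rabs K * (INR M * INR M)))) as [r Hr].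
  exists r, (1 / 2). split; [lra|].
  intros g w i j u Hw Hgeo Hij _ Hu Heq Hlen.
  set (q := vertex grp g u).
  set (near := fun k => path_near grp Z q (length u) r (vertex grp g w k)).
  exists (filter near (seq i (j - i))). split; [|split].
  - apply NoDup_filter, seq_NoDup.
  - apply Forall_forall. intros k Hk. apply filter_In in Hk as [Hk Hnear]. apply in_seq in Hk.
    split; [lia|]. apply Nat.leb_le, dist_path_le_witness in Hnear; auto.
  - pose proof (far_vertices_bound grp Z S M Zinv Zgen SZ S1 SM L g w u r i (j - i) HL
      Hw Hgeo Hu Heq ltac:(lia)) as Hfar.
    assert (Hwu : (length w <= length u)%nat) by (apply Hgeo; auto).
    pose proof (filter_length near (seq i (j - i))) as Hsplit. rewrite length_seq in Hsplit.
    set (n_near := length (filter near _)) in *. set (n_far := length (filter _ _)) in *.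
    rewrite <- Hsplit, plus_INR in Hlen |- *.
    apply (half_le_of_weighted_bound _ _ (INR r + 1) (Rabs L * Rabs K * (INR M * INR M)));
      auto using pos_INR, Rmult_le_pos, Rabs_pos; [lra|].
    rewrite S_INR in Hfar. eapply Rle_trans; [exact Hfar|].
    rewrite plus_INR. apply le_INR in Hwu.
    pose proof (pos_INR (length w)). pose proof (pos_INR n_near). pose proof (pos_INR n_far).
    apply mul_le_abs_bound; auto using pos_INR, Rmult_le_pos; lra.
Qed.
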